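(* Let $\mathcal{D}$ be a small category, let $F\colon \mathcal{D}\to \mathbf{sCat}$ be a functor, and let $f=\mathrm{N}\circ F\colon \mathcal{D}\to\mathbf{sSet}$. Then there is an isomorphism of simplicial sets \[\mathrm{N}(\mathbf{Gr}\,F)\cong \mathrm{N}_f(\mathcal{D})\] compatible with the canonical projections of both sides to $\mathrm{N}(\mathcal{D})$ (the paper states this as an isomorphism of coCartesian fibrations over $\mathrm{N}(\mathcal{D})$).
   Context: $\mathbf{sCat}$ is the category of simplicially enriched categories, $\mathrm{N}\colon\mathbf{sCat}\to\mathbf{sSet}$ is the simplicial (homotopy coherent) nerve, right adjoint to $\mathfrak{C}\colon \mathbf{sSet}\to\mathbf{sCat}$; $\mathrm{N}(\mathcal{D})$ is the ordinary nerve. Relative nerve: for $f\colon\mathcal{D}\to\mathbf{sSet}$, $\mathrm{N}_f(\mathcal{D})$ is the simplicial set whose $n$-simplices consist of (i) a functor $d\colon[n]\to\mathcal{D}$, writing $d_i=d(i)$ and $d_{ij}\colon d_i\to d_j$ for $i\le j$; (ii) for every nonempty $J\subseteq[n]$ with maximal element $j$, a map $s^J\colon\Delta^J\to f(d_j)$; (iii) such that for nonempty $I\subseteq J$ with maxima $i\le j$, $f(d_{ij})\circ s^I = s^J|_{\Delta^I}$. It has a canonical map to $\mathrm{N}(\mathcal{D})$. Grothendieck construction: $\mathbf{Gr}\,F$ is the simplicial category with objects pairs $(x,c)$, $c\in\mathcal{D}$, $x\in\mathrm{Ob}(Fc)$, and hom simplicial sets $\mathbf{Gr}F((x,c),(y,d))=\coprod_{\varphi\colon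 c\to d} Fd(F\varphi\,x,y)\times\{\varphi\}$; composition of $(\sigma,\varphi)\colon(x,c)\to(y,d)$ and $(\tau,\psi)\colon(y,d)\to(z,e)$ is $(\tau\circ F\psi(\sigma),\psi\varphi)$ (extended simplicially). There is a simplicial functor $\mathbf{Gr}F\to\mathcal{D}$, $(x,c)\mapsto c$, with $\mathcal{D}$ viewed as a discrete simplicial category, whose nerve gives the projection $\mathrm{N}(\mathbf{Gr}F)\to\mathrm{N}(\mathcal{D})$. *)

From Stdlib Require Import ProofIrrelevance FunctionalExtensionality JMeq.
From HB Require Import structures.
From mathcomp Require Import all_boot.
From mathcomp Require Import zify.

Set Implicit Arguments.
Unset Strict Implicit.
Unset Printing Implicit Defensive.

Definition monotone m n (g : 'I_m.+1 -> 'I_n.+1) : bool :=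
  [forall i : 'I_m.+1, forall j : 'I_m.+1, (i <= j) ==> (g i <= g j)].

Definition Dmap m n := {g : 'I_m.+1 -> 'I_n.+1 | monotone g}.
Definition dfun m n (g : Dmap m n) : 'I_m.+1 -> 'I_n.+1 := proj1_sig g.
Coercion dfun : Dmap >-> Funclass.

Lemma monoP m n (g : Dmap m n) (i j : 'I_m.+1) : i <= j -> g i <= g j.
Proof.
move=> h; have := proj2_sig g.
by move/forallP/(_ i)/forallP/(_ j)/implyP; apply.
Qed.

Lemma did_mono n : monotone (fun i : 'I_n.+1 => i).
Proof. by apply/forallP=> i; apply/forallP=> j; apply/implyP. Qed.
Definition did n : Dmap n n := exist (@monotone n n) _ (did_mono n).

Lemma dcomp_mono m n p (h : Dmap n p) (g : Dmap m n) : monotone (fun i => h (g i)).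
Proof.
by apply/forallP=> i; apply/forallP=> j; apply/implyP=> ij; apply/monoP/monoP.
Qed.
Definition dcomp m n p (h : Dmap n p) (g : Dmap m n) : Dmap m p :=
  exist (@monotone m p) _ (dcomp_mono h g).

Lemma degen0_mono k : monotone (fun _ : 'I_k.+1 => (ord0 : 'I_1)).
Proof. by apply/forallP=> i; apply/forallP=> j; apply/implyP. Qed.
Definition degen0 k : Dmap k 0 := exist (@monotone k 0) _ (degen0_mono k).

Record ssetData := SSetData {
  sx : nat -> Type;
  sact : forall m n, Dmap m n -> sx n -> sx m }.
Arguments sact {s m n}.

Definition is_sset (X : ssetData) : Prop :=
  (forall n (x : sx X n), sact (did n) x = x) /\
  (forall m n p (g : Dmap m n) (h : Dmap n p) (x : sx X p),
      sact (dcomp h g) x = sact g (sact h x)).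

Record sCatData := SCatData {
  ob : Type;
  hom : ob -> ob -> ssetData;
  comp : forall x y z k, sx (hom y z) k -> sx (hom x y) k -> sx (hom x z) k;
  idn : forall x, sx (hom x x) 0 }.
Arguments comp {s x y z k}.
Arguments idn {s}.

Definition is_sCat (C : sCatData) : Prop :=
  (forall x y : ob C, is_sset (hom x y)) /\
  (forall (x y z : ob C) m n (g : Dmap m n) (f1 : sx (hom y z) n) (f2 : sx (hom x y) n),
      sact g (comp f1 f2) = comp (sact g f1) (sact g f2)) /\
  (forall (x y z w : ob C) k (f : sx (hom z w) k) (h : sx (hom y z) k) (l : sx (hom x y) k),
      comp (comp f h) l = comp f (comp h l)) /\
  (forall (x y : ob C) k (f : sx (hom x y) k), comp (sact (degen0 k) (idn y)) f = f) /\
  (forall (x y : ob C) k (f : sx (hom x y) k), comp f (sact (degen0 k) (idn x)) = f).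

Record sFunctorData (C D : sCatData) := SFun {
  fo : ob C -> ob D;
  fh : forall x y k, sx (hom x y) k -> sx (hom (fo x) (fo y)) k }.
Arguments fo {C D} s _.
Arguments fh {C D} s {x y k}.

Definition is_sFunctor C D (G : sFunctorData C D) : Prop :=
  (forall (x y : ob C) m n (g : Dmap m n) (f : sx (hom x y) n),
      fh G (sact g f) = sact g (fh G f)) /\
  (forall (x y z : ob C) k (f1 : sx (hom y z) k) (f2 : sx (hom x y) k),
      fh G (comp f1 f2) = comp (fh G f1) (fh G f2)) /\
  (forall x : ob C, fh G (idn x) = idn (fo G x)).

Definition sFid (C : sCatData) : sFunctorData C C :=
  @SFun C C (fun x => x) (fun x y k f => f).
Definition sFcomp C D E (G : sFunctorData D E) (H : sFunctorData C D) :
  sFunctorData C E :=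
  @SFun C E (fun x => fo G (fo H x)) (fun x y k f => fh G (fh H f)).

Record Cat := MkCat {
  cob : Type;
  chom : cob -> cob -> Type;
  cid : forall x, chom x x;
  ccomp : forall x y z, chom y z -> chom x y -> chom x z;
  ccomp_idl : forall x y (f : chom x y), ccomp (cid y) f = f;
  ccomp_idr : forall x y (f : chom x y), ccomp f (cid x) = f;
  ccomp_assoc : forall x y z w (f : chom z w) (g : chom y z) (h : chom x y),
      ccomp (ccomp f g) h = ccomp f (ccomp g h) }.
Arguments cid {c}.
Arguments ccomp {c x y z}.

Record sCatFunctor (D : Cat) := MkSCatFunctor {
  Fob : cob D -> sCatData;
  Fmor : forall c d, chom c d -> sFunctorData (Fob c) (Fob d);
  Fob_sCat : forall c, is_sCat (Fob c);
  Fmor_sFun : forall c d (u : chom c d), is_sFunctor (Fmor u);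
  Fmor_id : forall c, Fmor (cid c) = sFid (Fob c);
  Fmor_comp : forall c d e (v : chom d e) (u : chom c d),
      Fmor (ccomp v u) = sFcomp (Fmor v) (Fmor u) }.
Arguments Fmor {D} s {c d}.
Arguments Fmor_sFun {D} s {c d}.

(** * The Grothendieck construction Gr F                                *)

Section Groth.
Variables (D : Cat) (F : sCatFunctor D).

Definition Grob := {c : cob D & ob (Fob F c)}.

(** Gr F((c,x),(d,y)) = coprod_{u : c -> d} F d (F u x, y) *)
Definition Grhom (p q : Grob) : ssetData :=
  @SSetData
    (fun k => {u : chom (projT1 p) (projT1 q) &
                   sx (hom (fo (Fmor F u) (projT2 p)) (projT2 q)) k})
    (fun m n g s => existT _ (projT1 s) (sact g (projT2 s))).

(** (tau, v) o (sigma, u) = (tau o F v (sigma), v u) *)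
Definition Grcomp (p q r : Grob) k (t : sx (Grhom q r) k) (s : sx (Grhom p q) k) :
  sx (Grhom p r) k :=
  existT _ (ccomp (projT1 t) (projT1 s))
    (eq_rect_r (fun o => sx (hom o (projT2 r)) k)
       (comp (projT2 t) (fh (Fmor F (projT1 t)) (projT2 s)))
       (f_equal (fun G => fo G (projT2 p)) (Fmor_comp F (projT1 t) (projT1 s)))).

Definition Gridn (p : Grob) : sx (Grhom p p) 0 :=
  existT _ (cid (projT1 p))
    (eq_rect_r (fun o => sx (hom o (projT2 p)) 0)
       (idn (projT2 p))
       (f_equal (fun G => fo G (projT2 p)) (Fmor_id F (projT1 p)))).

Definition GrF : sCatData := @SCatData Grob Grhom Grcomp Gridn.

End Groth.

(** For J a subset of [n] (a finite totally ordered set), C[Delta^J] has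
    objects the elements of J and C[Delta^J](x,y) = N(P_{x,y}), where
    P_{x,y} is the poset (under inclusion) of subsets S of J with
    x, y in S and S contained in the interval [x,y]; composition is union.
    A k-simplex of N(P_{x,y}) is a chain c 0 <= ... <= c k in P_{x,y};
    [chainv J x y c] says that c is such a chain. *)
Definition chainv n (J : {set 'I_n.+1}) (x y : 'I_n.+1) k
    (c : 'I_k.+1 -> {set 'I_n.+1}) : bool :=
  [forall t : 'I_k.+1,
     [&& x \in c t, y \in c t, c t \subset J & c t \subset [set z : 'I_n.+1 | x <= z <= y]]] &&
  [forall t : 'I_k.+1, forall u : 'I_k.+1, (t <= u) ==> (c t \subset c u)].

(** A simplicial functor C[Delta^J] -> C, i.e. (by the adjunction C -| N)
    a map of simplicial sets Delta^J -> N(C).  Simplices of C[Delta^J]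
    are passed together with the (boolean, hence unique) proof that they
    are valid chains. *)
Record hcF (C : sCatData) n (J : {set 'I_n.+1}) := HcF {
  hob : forall x, x \in J -> ob C;
  hhom : forall x y (hx : x \in J) (hy : y \in J) k (c : 'I_k.+1 -> {set 'I_n.+1}),
      chainv J x y c -> sx (hom (hob hx) (hob hy)) k;
  hnat : forall x y hx hy m k (g : Dmap m k) c (hc : chainv J x y c)
      (hc' : chainv J x y (fun t => c (g t))),
      hhom hx hy hc' = sact g (hhom hx hy hc);
  hcomp : forall x y z hx hy hz k (c1 c2 : 'I_k.+1 -> {set 'I_n.+1}) (h1 : chainv J x y c1) (h2 : chainv J y z c2)
      (h3 : chainv J x z (fun t => c2 t :|: c1 t)),
      hhom hx hz h3 = comp (hhom hy hz h2) (hhom hx hy h1);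
  hid : forall x hx (h : chainv J x x (fun _ : 'I_1 => [set x])),
      hhom hx hx h = idn (hob hx) }.
Arguments hob {C n J} _ {x} _.
Arguments hhom {C n J} _ {x y} _ _ {k c} _.

(** The homotopy coherent nerve: N(C)_n = sCat(C[Delta^n], C). *)
Definition hcN (C : sCatData) n := hcF C [set: 'I_n.+1].

Lemma hob_eq C n (J : {set 'I_n.+1}) (s : hcF C J) x x' (hx : x \in J) (hx' : x' \in J) :
  x = x' -> hob s hx = hob s hx'.
Proof. by move=> e; subst x'; rewrite (eq_irrelevance hx hx'). Qed.

Lemma hhom_irr C n (J : {set 'I_n.+1}) (s : hcF C J) x x' y y'
    (hx : x \in J) (hx' : x' \in J) (hy : y \in J) (hy' : y' \in J) k
    (c c' : 'I_k.+1 -> {set 'I_n.+1}) (hc : chainv J x y c) (hc' : chainv J x' y' c') :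
  x = x' -> y = y' -> c = c' -> JMeq (hhom s hx hy hc) (hhom s hx' hy' hc').
Proof.
move=> ex ey ec; subst x' y' c'.
by rewrite (eq_irrelevance hx hx') (eq_irrelevance hy hy') (eq_irrelevance hc hc').
Qed.

Lemma hhom_ext C n (J : {set 'I_n.+1}) (s : hcF C J) x y
    (hx : x \in J) (hy : y \in J) k
    (c c' : 'I_k.+1 -> {set 'I_n.+1}) (hc : chainv J x y c) (hc' : chainv J x y c') :
  c = c' -> hhom s hx hy hc = hhom s hx hy hc'.
Proof. by move=> ec; subst c'; rewrite (eq_irrelevance hc hc'). Qed.

Lemma hcF_eq C n (J : {set 'I_n.+1}) (s1 s2 : hcF C J) :
  (forall x (hx : x \in J), hob s1 hx = hob s2 hx) ->
  (forall x y (hx : x \in J) (hy : y \in J) k (c : 'I_k.+1 -> {set 'I_n.+1})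
     (hc : chainv J x y c), JMeq (hhom s1 hx hy hc) (hhom s2 hx hy hc)) ->
  s1 = s2.
Proof.
case: s1 => o1 h1 n1 c1 i1; case: s2 => o2 h2 n2 c2 i2 /= eo eh.
have E : o1 = o2.
  by apply: functional_extensionality_dep => x;
     apply: functional_extensionality_dep => hx; exact: eo.
subst o2.
have E : h1 = h2.
  do 7 (apply: functional_extensionality_dep => ?).
  by apply: JMeq_eq; apply: eh.
subst h2.
by rewrite (proof_irrelevance _ n1 n2) (proof_irrelevance _ c1 c2)
           (proof_irrelevance _ i1 i2).
Qed.

Section Pull.
Variables (C : sCatData) (m n : nat) (g : Dmap m n)
  (J' : {set 'I_m.+1}) (J : {set 'I_n.+1}) (H : [set g x | x in J'] \subset J).

Lemma pull_mem x : x \in J' -> g x \in J.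
Proof. by move=> hx; apply: (subsetP H); apply: imset_f. Qed.

Lemma pull_chain x y k (c : 'I_k.+1 -> {set 'I_m.+1}) :
  chainv J' x y c -> chainv J (g x) (g y) (fun t => [set g z | z in c t]).
Proof.
case/andP=> /forallP h1 /forallP h2; apply/andP; split.
  apply/forallP=> t; have /and4P[hx hy hJ hI] := h1 t.
  apply/and4P; split; try exact: imset_f.
    by apply: subset_trans H; apply: imsetS.
  apply/subsetP=> _ /imsetP[z zc ->]; rewrite inE.
  have := subsetP hI z zc; rewrite inE => /andP[a b].
  by rewrite (monoP g a) (monoP g b).
apply/forallP=> t; apply/forallP=> u; apply/implyP=> tu.
by apply: imsetS; have := h2 t => /forallP /(_ u) /implyP; apply.
Qed.

(** Given s : C[Delta^J] -> C and g mapping J' into J, the composite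
    C[Delta^J'] -> C[Delta^J] -> C  (C[g] sends a subset S to g(S)). *)
Definition pull (s : hcF C J) : hcF C J'.
Proof.
refine (@HcF C m J' (fun x hx => hob s (pull_mem hx))
          (fun x y hx hy k c hc => hhom s (pull_mem hx) (pull_mem hy) (pull_chain hc))
          _ _ _).
- move=> x y hx hy p k a c hc hc'; exact: hnat.
- move=> x y z hx hy hz k c1 c2 h1 h2 h3.
  have e : (fun t => [set g w | w in c2 t :|: c1 t]) =
           (fun t => [set g w | w in c2 t] :|: [set g w | w in c1 t]).
    by apply: functional_extensionality => t; rewrite imsetU.
  have h3' := pull_chain h3; simpl in h3'; rewrite e in h3'.
  by rewrite (hhom_ext _ _ _ _ h3' e) (hcomp _ _ (pull_mem hy) _ (pull_chain h1) (pull_chain h2)).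
- move=> x hx h.
  have e : (fun _ : 'I_1 => [set g w | w in [set x]]) = (fun _ => [set g x]).
    by apply: functional_extensionality => t; rewrite imset_set1.
  have h' := pull_chain h; simpl in h'; rewrite e in h'.
  by rewrite (hhom_ext _ _ _ _ h' e) hid.
Defined.

End Pull.
Arguments pull {C m n} g {J' J} H s.

Section Post.
Variables (C C' : sCatData) (G : sFunctorData C C') (HG : is_sFunctor G).

Definition postcomp n (J : {set 'I_n.+1}) (s : hcF C J) : hcF C' J.
Proof.
refine (@HcF C' n J (fun x hx => fo G (hob s hx))
          (fun x y hx hy k c hc => fh G (hhom s hx hy hc)) _ _ _).
- move=> x y hx hy p k a c hc hc' /=; rewrite (hnat s hx hy hc hc').
  exact: (proj1 HG).
- move=> x y z hx hy hz k c1 c2 h1 h2 h3 /=; rewrite (hcomp s hx hy hz h1 h2 h3).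
  exact: (proj1 (proj2 HG)).
- move=> x hx h /=; rewrite (hid s hx h); exact: (proj2 (proj2 HG)).
Defined.
End Post.
Arguments postcomp {C C' G} HG {n J} s.

Lemma restrict_sub n (I J : {set 'I_n.+1}) :
  I \subset J -> [set did n x | x in I] \subset J.
Proof. by move=> H; rewrite imset_id. Qed.

Definition restrict C n (I J : {set 'I_n.+1}) (H : I \subset J) (s : hcF C J) : hcF C I :=
  pull (did n) (restrict_sub H) s.
Arguments restrict {C n I J} H s.

Definition hcNact C m n (g : Dmap m n) (s : hcN C n) : hcN C m :=
  pull g (subsetT _) s.

Lemma pull_pull C p m n (g1 : Dmap p m) (g2 : Dmap m n) (g3 : Dmap p n)
    (K : {set 'I_p.+1}) (J' : {set 'I_m.+1}) (J : {set 'I_n.+1})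
    (H1 : [set g1 x | x in K] \subset J') (H2 : [set g2 x | x in J'] \subset J)
    (H3 : [set g3 x | x in K] \subset J) (s : hcF C J) :
  (forall x, g2 (g1 x) = g3 x) -> pull g1 H1 (pull g2 H2 s) = pull g3 H3 s.
Proof.
move=> e; apply: hcF_eq => [x hx | x y hx hy k c hc] /=.
  exact: hob_eq.
apply: hhom_irr => //; apply: functional_extensionality => t.
by rewrite -imset_comp; apply: eq_imset => z /=.
Qed.

Lemma postcomp_pull C C' (G : sFunctorData C C') (HG : is_sFunctor G) m n
    (g : Dmap m n) (J' : {set 'I_m.+1}) (J : {set 'I_n.+1})
    (H : [set g x | x in J'] \subset J) (s : hcF C J) :
  postcomp HG (pull g H s) = pull g H (postcomp HG s).
Proof. by apply: hcF_eq. Qed.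

Record NDs (D : Cat) n := NDS {
  ndo : 'I_n.+1 -> cob D;
  ndm : forall i j : 'I_n.+1, i <= j -> chom (ndo i) (ndo j);
  nd_id : forall (i : 'I_n.+1) (h : i <= i), ndm h = cid (ndo i);
  nd_comp : forall (i j l : 'I_n.+1) (h1 : i <= j) (h2 : j <= l) (h3 : i <= l),
      ndm h3 = ccomp (ndm h2) (ndm h1) }.
Arguments ndo {D n} _ _.
Arguments ndm {D n} _ {i j} _.

Definition ndact D m n (g : Dmap m n) (d : NDs D n) : NDs D m.
Proof.
refine (@NDS D m (fun i => ndo d (g i)) (fun i j h => ndm d (monoP g h)) _ _).
- by move=> i h; apply: nd_id.
- by move=> i j l h1 h2 h3; apply: nd_comp.
Defined.

Definition NGr D (F : sCatFunctor D) n := hcN (GrF F) n.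
Definition NGract D (F : sCatFunctor D) m n (g : Dmap m n) (s : NGr F n) : NGr F m :=
  hcNact g s.

Lemma ivl_chain n (i j : 'I_n.+1) : i <= j ->
  chainv [set: 'I_n.+1] i j (fun _ : 'I_1 => [set z : 'I_n.+1 | i <= z <= j]).
Proof.
move=> h; apply/andP; split; apply/forallP=> t.
  by rewrite !inE leqnn h leqnn /= subsetT subxx.
by apply/forallP=> u; apply/implyP=> _; rewrite subxx.
Qed.

Definition grmor D (F : sCatFunctor D) (p q : Grob F) k
  (a : sx (hom (s := GrF F) p q) k) : chom (projT1 p) (projT1 q) := projT1 a.

(** The projection Gr F -> D (D discrete) induces N(Gr F) -> N(D): a
    simplicial functor C[Delta^n] -> Gr F is sent to the functor
    [n] -> D with i |-> c_i and (i <= j) |-> the D-component of the image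
    of the vertex [i,j] of C[Delta^n](i,j) (all vertices of the connected
    simplicial set C[Delta^n](i,j) have the same D-component). *)
Definition projGr D (F : sCatFunctor D) n (s : NGr F n) : NDs D n.
Proof.
refine (@NDS D n (fun i => projT1 (hob s (in_setT i)))
   (fun i j h => grmor (hhom s (in_setT i) (in_setT j) (ivl_chain h))) _ _).
- move=> i h.
  have e : (fun _ : 'I_1 => [set z : 'I_n.+1 | i <= z <= i]) = (fun _ => [set i]).
    apply: functional_extensionality => t; apply/setP => z; rewrite !inE -eqn_leq.
    by apply/eqP/eqP => [/val_inj|->].
  have h' := ivl_chain h; rewrite e in h'.
  by rewrite /grmor (hhom_ext _ _ _ _ h' e) (hid s).
- move=> i j l h1 h2 h3.
  have e : (fun _ : 'I_1 => [set z : 'I_n.+1 | i <= z <= l]) =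
     (fun t => (fun _ : 'I_1 => [set z : 'I_n.+1 | j <= z <= l]) t :|:
               (fun _ : 'I_1 => [set z : 'I_n.+1 | i <= z <= j]) t).
    apply: functional_extensionality => t; apply/setP => z; rewrite !inE.
    apply/idP/idP.
      case/andP=> a b; apply/orP; case: (leqP j z) => c; [left|right];
        by apply/andP; split; lia.
    by case/orP=> /andP[a b]; apply/andP; split; lia.
  have h' := ivl_chain h3; rewrite e in h'.
  by rewrite /grmor (hhom_ext _ _ _ _ h' e) (hcomp s _ _ _ (ivl_chain h1) (ivl_chain h2)).
Defined.

(** * The relative nerve N_f(D), f = N o F                               *)

Definition is_max n (j : 'I_n.+1) (J : {set 'I_n.+1}) : bool :=
  (j \in J) && [forall x in J, x <= j].

(** An n-simplex of N_f(D):
    (i) a functor d : [n] -> D,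
    (ii) for every nonempty J <= [n] with maximum j, a map
         s^J : Delta^J -> f(d_j) = N(F d_j), i.e. (adjunction) a simplicial
         functor C[Delta^J] -> F(d_j),
    (iii) for nonempty I <= J with maxima i <= j,
         f(d_ij) o s^I = s^J restricted to Delta^I. *)
Record RN D (F : sCatFunctor D) n := RNS {
  rd : NDs D n;
  rs : forall (J : {set 'I_n.+1}) (j : 'I_n.+1), is_max j J -> hcF (Fob F (ndo rd j)) J;
  rcompat : forall (I J : {set 'I_n.+1}) (i j : 'I_n.+1) (hi : is_max i I) (hj : is_max j J)
      (HIJ : I \subset J) (hij : i <= j),
      postcomp (Fmor_sFun F (ndm rd hij)) (rs hi) = restrict HIJ (rs hj) }.
Arguments rd {D F n} _.
Arguments rs {D F n} _ {J j} _.

Lemma is_max_img m n (g : Dmap m n) (J : {set 'I_m.+1}) (j : 'I_m.+1) :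
  is_max j J -> is_max (g j) [set g x | x in J].
Proof.
case/andP=> hj /forallP hJ; apply/andP; split; first exact: imset_f.
apply/forallP=> y; apply/implyP=> /imsetP[x xJ ->].
by apply: monoP; have := hJ x; rewrite xJ.
Qed.

Definition RNact D (F : sCatFunctor D) m n (g : Dmap m n) (r : RN F n) : RN F m.
Proof.
refine (@RNS D F m (ndact g (rd r))
  (fun J j hj => pull g (subxx [set g x | x in J]) (rs r (is_max_img g hj))) _).
move=> I J i j hi hj HIJ hij /=.
rewrite postcomp_pull.
rewrite (rcompat r (is_max_img g hi) (is_max_img g hj) (imsetS _ HIJ) (monoP g hij)).
rewrite /restrict.
rewrite (pull_pull (g3 := g) _ _ (imsetS _ HIJ)) //.
by rewrite (pull_pull (g3 := g) _ _ (imsetS _ HIJ)).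
Defined.

From Pilot Require Import Defs.
From Stdlib Require Import ProofIrrelevance FunctionalExtensionality JMeq.
From HB Require Import structures.
From mathcomp Require Import all_boot.

(* An n-simplex of N(Gr F) is a simplicial functor s : C[Delta^n] -> Gr F.  The hom
   simplicial sets of Gr F are coproducts indexed by morphisms of D, and every
   C[Delta^n](x, y) is connected (each vertex S lies below the vertex [x, y]), so s has a
   constant D-component d_{x y} on each hom; this is the functor d : [n] -> D.  For J with
   maximum j, pushing the fibre part of s|J forward along F(d_{- j}) lands in the single
   simplicial category F(d_j) and gives s^J; functoriality of F gives the compatibilities.
   Conversely (d, s^J) determines s: x goes to (d_x, s^{x}(x)) and a chain from x to y to
   (d_{x y}, s^{[x, y]}(chain)), the compatibilities identifying the endpoints. *)

Set Implicit Arguments.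
Unset Strict Implicit.
Unset Printing Implicit Defensive.

Lemma existT_JMeq A (P : A -> Type) (u u' : A) (a : P u) (a' : P u') :
  u = u' -> JMeq a a' -> existT P u a = existT P u' a'.
Proof. by move=> e H; subst u'; rewrite (JMeq_eq H). Qed.

Section HomTransport.
Variable C : sCatData.

Definition cast_hom (a a' b b' : ob C) k (e1 : a = a') (e2 : b = b')
    (f : sx (hom a b) k) : sx (hom a' b') k :=
  eq_rect _ (fun a0 => sx (hom a0 b') k)
    (eq_rect _ (fun b0 => sx (hom a b0) k) f _ e2) _ e1.

Lemma JMeq_cast_hom (a a' b b' : ob C) k (e1 : a = a') (e2 : b = b')
    (f : sx (hom a b) k) :
  JMeq (cast_hom e1 e2 f) f.
Proof. by case: a' / e1; case: b' / e2. Qed.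

Lemma cast_hom_JMeq (a a0 a' b b0 b' : ob C) k (e1 : a = a') (e2 : b = b')
    (e1' : a0 = a') (e2' : b0 = b') (f : sx (hom a b) k) (f' : sx (hom a0 b0) k) :
  JMeq f f' -> cast_hom e1 e2 f = cast_hom e1' e2' f'.
Proof. by move=> H; subst a' b' a0 b0; rewrite (JMeq_eq H). Qed.

Lemma JMeq_eq_rect_r_hom (a a' b : ob C) k (f : sx (hom a' b) k) (e : a = a') :
  JMeq (eq_rect_r (fun o => sx (hom o b) k) f e) f.
Proof. by subst a. Qed.

Lemma sact_cast_hom (a a' b b' : ob C) (e1 : a = a') (e2 : b = b') m n
    (g : Dmap m n) (f : sx (hom a b) n) :
  sact g (cast_hom e1 e2 f) = cast_hom e1 e2 (sact g f).
Proof. by subst a' b'. Qed.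

Lemma comp_JMeq (x x' y y' z z' : ob C) (ex : x = x') (ey : y = y') (ez : z = z') k
    (f1 : sx (hom y z) k) (f1' : sx (hom y' z') k)
    (f2 : sx (hom x y) k) (f2' : sx (hom x' y') k) :
  JMeq f1 f1' -> JMeq f2 f2' -> JMeq (Defs.comp f1 f2) (Defs.comp f1' f2').
Proof. by move=> H1 H2; subst x' y' z'; rewrite (JMeq_eq H1) (JMeq_eq H2). Qed.

Lemma idn_JMeq (x x' : ob C) : x = x' -> JMeq (idn x) (idn x').
Proof. by move=> ->. Qed.

End HomTransport.

Section FunctorTransport.
Variables (C C' : sCatData) (G : sFunctorData C C').

Lemma fh_cast_hom (a a' b b' : ob C) k (e1 : a = a') (e2 : b = b') (f : sx (hom a b) k) :
  fh G (cast_hom e1 e2 f) = cast_hom (f_equal (fo G) e1) (f_equal (fo G) e2) (fh G f).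
Proof. by subst a' b'. Qed.

Lemma fh_JMeq (x x' y y' : ob C) (ex : x = x') (ey : y = y') k
    (f : sx (hom x y) k) (f' : sx (hom x' y') k) :
  JMeq f f' -> JMeq (fh G f) (fh G f').
Proof. by move=> H; subst x' y'; rewrite (JMeq_eq H). Qed.

Lemma fh_eq_rect_r (a a' b : ob C) k (f : sx (hom a' b) k) (e : a = a') :
  JMeq (fh G (eq_rect_r (fun o => sx (hom o b) k) f e)) (fh G f).
Proof. by subst a. Qed.

Lemma fh_sFunctor_JMeq (G' : sFunctorData C C') (x y : ob C) k (f : sx (hom x y) k) :
  G = G' -> JMeq (fh G f) (fh G' f).
Proof. by move=> <-. Qed.

End FunctorTransport.

Section Chains.
Variable n : nat.
Implicit Types (J : {set 'I_n.+1}) (x y z : 'I_n.+1).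

Definition interval x y := [set z : 'I_n.+1 | x <= z <= y].

Lemma mem_interval_l x y : x <= y -> x \in interval x y.
Proof. by move=> h; rewrite inE leqnn h. Qed.

Lemma mem_interval_r x y : x <= y -> y \in interval x y.
Proof. by move=> h; rewrite inE leqnn h. Qed.

Lemma sub1_interval x y z : x <= z -> z <= y -> [set z] \subset interval x y.
Proof. by move=> a b; rewrite sub1set inE a b. Qed.

Lemma sub_interval x y x' y' : x' <= x -> y <= y' -> interval x y \subset interval x' y'.
Proof.
move=> a b; apply/subsetP=> z; rewrite !inE => /andP[c e].
by rewrite (leq_trans a c) (leq_trans e b).
Qed.

Lemma is_max_le J j x : is_max j J -> x \in J -> x <= j.
Proof. by case/andP=> _ /forallP /(_ x) /implyP. Qed.

Lemma is_max_set1 x : is_max x [set x].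
Proof. by rewrite /is_max set11; apply/forallP=> z; apply/implyP; rewrite inE => /eqP ->. Qed.

Lemma is_max_setI_interval J x y : y \in J -> x <= y -> is_max y (J :&: interval x y).
Proof.
move=> hy h; rewrite /is_max inE hy mem_interval_r //=.
by apply/forallP=> z; apply/implyP; rewrite !inE => /andP[_ /andP[]].
Qed.

Lemma is_max_interval x y : x <= y -> is_max y (interval x y).
Proof. by move=> h; rewrite -[interval x y]setTI is_max_setI_interval. Qed.

Variables (x y : 'I_n.+1) (k : nat) (c : 'I_k.+1 -> {set 'I_n.+1}).

Lemma chainv_le J : chainv J x y c -> x <= y.
Proof.
case/andP=> /forallP /(_ ord0) /and4P[hx _ _ hI] _.
by move: (subsetP hI x hx); rewrite inE => /andP[].
Qed.

Lemma chainvS J J' : J \subset J' -> chainv J x y c -> chainv J' x y c.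
Proof.
move=> HJ /andP[/forallP h1 h2]; apply/andP; split => //.
apply/forallP=> t; have /and4P[a b e f] := h1 t.
by apply/and4P; split => //; apply: subset_trans HJ.
Qed.

Lemma chainv_setI_interval J : chainv J x y c -> chainv (J :&: interval x y) x y c.
Proof.
case/andP=> /forallP h1 h2; apply/andP; split => //.
by apply/forallP=> t; have /and4P[a b e f] := h1 t; apply/and4P; split; rewrite ?subsetI ?e.
Qed.

Lemma chainv_interval J : chainv J x y c -> chainv (interval x y) x y c.
Proof. by move/chainv_setI_interval; apply: chainvS; apply: subsetIr. Qed.

Lemma chainv_vertex J (t : 'I_k.+1) : chainv J x y c -> chainv J x y (fun _ : 'I_1 => c t).
Proof.
case/andP=> /forallP h1 _; apply/andP; split; apply/forallP=> u; first exact: h1.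
by apply/forallP=> v; apply/implyP.
Qed.

End Chains.

Lemma vertex_mono k (t : 'I_k.+1) : monotone (fun _ : 'I_1 => t).
Proof. by apply/forallP=> i; apply/forallP=> j; apply/implyP. Qed.

Definition dvertex k (t : 'I_k.+1) : Dmap 0 k := exist (@monotone 0 k) _ (vertex_mono t).

Lemma hcF_JMeq (C C' : sCatData) n (J : {set 'I_n.+1}) (s1 : hcF C J) (s2 : hcF C' J) :
  C = C' ->
  (forall x (hx : x \in J), JMeq (hob s1 hx) (hob s2 hx)) ->
  (forall x y (hx : x \in J) (hy : y \in J) k (c : 'I_k.+1 -> {set 'I_n.+1})
     (hc : chainv J x y c), JMeq (hhom s1 hx hy hc) (hhom s2 hx hy hc)) ->
  JMeq s1 s2.
Proof.
move=> eC; subst C' => H1 H2; have -> // : s1 = s2.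
by apply: hcF_eq => // x hx; apply: JMeq_eq.
Qed.

Lemma NDs_eq (D : Cat) n (d1 d2 : NDs D n) (eo : ndo d1 = ndo d2) :
  (forall (i j : 'I_n.+1) (h : i <= j), JMeq (ndm d1 h) (ndm d2 h)) -> d1 = d2.
Proof.
case: d1 eo => o1 m1 i1 c1; case: d2 => o2 m2 i2 c2 /= eo; subst o2 => H.
have E : m1 = m2.
  by do 3 apply: functional_extensionality_dep => ?; apply: JMeq_eq.
by subst m2; rewrite (proof_irrelevance _ i1 i2) (proof_irrelevance _ c1 c2).
Qed.

Lemma Fmor_ndm_comp (D : Cat) (F : sCatFunctor D) n (d : NDs D n) (x y z : 'I_n.+1)
    (h1 : x <= y) (h2 : y <= z) (h3 : x <= z) (u : chom (ndo d x) (ndo d y)) :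
  u = ndm d h1 -> sFcomp (Fmor F (ndm d h2)) (Fmor F u) = Fmor F (ndm d h3).
Proof. by move=> ->; rewrite (nd_comp d h1 h2 h3) Fmor_comp. Qed.

Lemma Fmor_ndm_id (D : Cat) (F : sCatFunctor D) n (d : NDs D n) (j : 'I_n.+1) (h : j <= j) :
  Fmor F (ndm d h) = sFid (Fob F (ndo d j)).
Proof. by rewrite nd_id Fmor_id. Qed.

Section GrothendieckNerve.
Variables (D : Cat) (F : sCatFunctor D).

Lemma RN_eq n (r1 r2 : RN F n) : rd r1 = rd r2 ->
  (forall (J : {set 'I_n.+1}) (j : 'I_n.+1) (hj : is_max j J), JMeq (rs r1 hj) (rs r2 hj)) ->
  r1 = r2.
Proof.
case: r1 => d1 s1 c1; case: r2 => d2 s2 c2 /= e; subst d2 => H.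
have E : s1 = s2.
  by do 3 apply: functional_extensionality_dep => ?; apply: JMeq_eq.
by subst s2; rewrite (proof_irrelevance _ c1 c2).
Qed.

Lemma Grhom_JMeq (p p' q q' : Grob F) k (a : sx (Grhom p q) k) (a' : sx (Grhom p' q') k) :
  p = p' -> q = q' -> JMeq (projT1 a) (projT1 a') -> JMeq (projT2 a) (projT2 a') -> JMeq a a'.
Proof.
move=> ep eq; subst p' q'; case: a => u a; case: a' => u' a' /= eu.
by have E := JMeq_eq eu; subst u' => ea; rewrite (JMeq_eq ea).
Qed.

Lemma fo_Fmor_JMeq (q q' : Grob F) (c c' : cob D)
    (u : chom (projT1 q) c) (u' : chom (projT1 q') c') :
  q = q' -> c = c' -> JMeq u u' -> JMeq (fo (Fmor F u) (projT2 q)) (fo (Fmor F u') (projT2 q')).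
Proof. by move=> eq ec eu; subst q' c'; rewrite (JMeq_eq eu). Qed.

Lemma fh_Fmor_JMeq (p p' q q' : Grob F) k (a : sx (Grhom p q) k) (a' : sx (Grhom p' q') k)
    (c c' : cob D) (u : chom (projT1 q) c) (u' : chom (projT1 q') c') :
  p = p' -> q = q' -> c = c' -> JMeq a a' -> JMeq u u' ->
  JMeq (fh (Fmor F u) (projT2 a)) (fh (Fmor F u') (projT2 a')).
Proof. by move=> ep eq ec ea eu; subst p' q' c'; rewrite (JMeq_eq ea) (JMeq_eq eu). Qed.

Section Simplex.
Variables (n : nat) (s : NGr F n).
Local Notation d := (projGr s).

Definition ngr_ob (x : 'I_n.+1) : Grob F := hob s (in_setT x).

Definition ngr_hom x y k (c : 'I_k.+1 -> {set 'I_n.+1}) (hc : chainv setT x y c) :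
  sx (Grhom (ngr_ob x) (ngr_ob y)) k := hhom s (in_setT x) (in_setT y) hc.

Lemma projT1_ngr_hom_vertex x y k c (hc : chainv setT x y c) (t : 'I_k.+1)
    (ht : chainv setT x y (fun _ : 'I_1 => c t)) :
  projT1 (ngr_hom hc) = projT1 (ngr_hom ht).
Proof. by rewrite /ngr_hom (hnat s _ _ (g := dvertex t) hc ht). Qed.

(* A vertex S of C[Delta^n](x, y) is joined to the vertex [x, y] by the edge S <= [x, y]. *)
Lemma projT1_ngr_hom0 x y S (hS : chainv setT x y (fun _ : 'I_1 => S)) (h : x <= y) :
  projT1 (ngr_hom hS) = ndm d h.
Proof.
pose e := fun t : 'I_2 => if t == ord0 then S else interval x y.
have he : chainv setT x y e.
  case/andP: hS => /forallP /(_ ord0) /and4P[Sx Sy _ SI] _.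
  apply/andP; split; apply/forallP=> t; rewrite /e.
    case: (t == ord0); first by rewrite Sx Sy SI subsetT.
    by rewrite mem_interval_l ?mem_interval_r ?subsetT ?subxx.
  apply/forallP=> u; apply/implyP; case: (t =P ord0) => [_|/eqP nt tu].
    by case: (u == ord0); rewrite ?subxx ?SI.
  rewrite ifF ?subxx //; apply: contraNF nt => /eqP eu.
  by move: tu; rewrite eu leqn0 => /eqP t0; apply/eqP/val_inj.
by rewrite -(projT1_ngr_hom_vertex he (t := ord0) hS)
           (projT1_ngr_hom_vertex he (t := ord_max) (ivl_chain h)).
Qed.

Lemma projT1_ngr_hom x y k (c : 'I_k.+1 -> {set 'I_n.+1}) (hc : chainv setT x y c)
    (h : x <= y) :
  projT1 (ngr_hom hc) = ndm d h.
Proof. by rewrite (projT1_ngr_hom_vertex hc (chainv_vertex ord0 hc)) projT1_ngr_hom0. Qed.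

Lemma projT1_hhom x y (hx : x \in setT) (hy : y \in setT) k (c : 'I_k.+1 -> {set 'I_n.+1})
    (hc : chainv setT x y c) (h : x <= y) :
  JMeq (projT1 (hhom s hx hy hc)) (ndm d h).
Proof.
rewrite (eq_irrelevance hx (in_setT x)) (eq_irrelevance hy (in_setT y)).
by rewrite -(projT1_ngr_hom hc h).
Qed.

End Simplex.

Section Phi.
Variables (n : nat) (s : NGr F n) (J : {set 'I_n.+1}) (j : 'I_n.+1) (hj : is_max j J).
Local Notation d := (projGr s).

Definition phi_ob x (hx : x \in J) : ob (Fob F (ndo d j)) :=
  fo (Fmor F (ndm d (is_max_le hj hx))) (projT2 (ngr_ob s x)).

Lemma phi_hom_src x y (hx : x \in J) (hy : y \in J) k (c : 'I_k.+1 -> {set 'I_n.+1})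
    (hc : chainv J x y c) :
  fo (Fmor F (ndm d (is_max_le hj hy)))
     (fo (Fmor F (projT1 (ngr_hom s (chainvS (subsetT J) hc)))) (projT2 (ngr_ob s x)))
  = phi_ob hx.
Proof.
have E := projT1_ngr_hom s (chainvS (subsetT J) hc) (chainv_le hc).
by rewrite /phi_ob -(Fmor_ndm_comp F (d := d) (is_max_le hj hy) (is_max_le hj hx) E).
Qed.

Definition phi_hom x y (hx : x \in J) (hy : y \in J) k (c : 'I_k.+1 -> {set 'I_n.+1})
    (hc : chainv J x y c) : sx (hom (phi_ob hx) (phi_ob hy)) k :=
  cast_hom (phi_hom_src hx hy hc) erefl
    (fh (Fmor F (ndm d (is_max_le hj hy))) (projT2 (ngr_hom s (chainvS (subsetT J) hc)))).

Lemma phi_hnat x y (hx : x \in J) (hy : y \in J) m k (g : Dmap m k)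
    (c : 'I_k.+1 -> {set 'I_n.+1}) (hc : chainv J x y c) (hc' : chainv J x y (fun t => c (g t))) :
  phi_hom hx hy hc' = sact g (phi_hom hx hy hc).
Proof.
rewrite /phi_hom sact_cast_hom; apply: cast_hom_JMeq.
by rewrite -(proj1 (Fmor_sFun F _)) /ngr_hom (hnat s _ _ (chainvS (subsetT J) hc)).
Qed.

Lemma phi_hcomp x y z (hx : x \in J) (hy : y \in J) (hz : z \in J) k
    (c1 c2 : 'I_k.+1 -> {set 'I_n.+1}) (h1 : chainv J x y c1) (h2 : chainv J y z c2)
    (h3 : chainv J x z (fun t => c2 t :|: c1 t)) :
  phi_hom hx hz h3 = Defs.comp (phi_hom hy hz h2) (phi_hom hx hy h1).
Proof.
apply: JMeq_eq; apply: JMeq_trans (JMeq_cast_hom _ _ _) _.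
rewrite /ngr_hom (hcomp s _ (in_setT y) _ (chainvS (subsetT J) h1) (chainvS (subsetT J) h2)).
set a1 := hhom s _ _ (chainvS (subsetT J) h1).
set a2 := hhom s _ _ (chainvS (subsetT J) h2).
have E1 : projT1 a1 = ndm d (chainv_le h1) := projT1_ngr_hom _ _ _.
have E2 : projT1 a2 = ndm d (chainv_le h2) := projT1_ngr_hom _ _ _.
have Gx := Fmor_ndm_comp F (d := d) (is_max_le hj hy) (is_max_le hj hx) E1.
have Gy := Fmor_ndm_comp F (d := d) (is_max_le hj hz) (is_max_le hj hy) E2.
apply: JMeq_trans (fh_eq_rect_r _ _ _) _.
rewrite (proj1 (proj2 (Fmor_sFun F _))).
apply: (comp_JMeq (x' := phi_ob hx) (y' := phi_ob hy)) => //.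
- by rewrite /phi_ob -Gx -Gy.
- by rewrite /phi_ob -Gy.
- exact: JMeq_sym (JMeq_cast_hom _ _ _).
- by apply: JMeq_trans _ (JMeq_sym (JMeq_cast_hom _ _ _)); rewrite -Gy.
Qed.

Lemma phi_hid x (hx : x \in J) (h : chainv J x x (fun _ : 'I_1 => [set x])) :
  phi_hom hx hx h = idn (phi_ob hx).
Proof.
apply: JMeq_eq; apply: JMeq_trans (JMeq_cast_hom _ _ _) _.
rewrite /ngr_hom (hid s _ (chainvS (subsetT J) h)).
apply: JMeq_trans (fh_eq_rect_r _ _ _) _.
by rewrite (proj2 (proj2 (Fmor_sFun F _))).
Qed.

Definition phi_rs : hcF (Fob F (ndo d j)) J := HcF phi_hnat phi_hcomp phi_hid.

End Phi.

Lemma phi_rcompat n (s : NGr F n) (I J : {set 'I_n.+1}) (i j : 'I_n.+1)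
    (hi : is_max i I) (hj : is_max j J) (HIJ : I \subset J) (hij : i <= j) :
  postcomp (Fmor_sFun F (ndm (projGr s) hij)) (phi_rs s hi) = restrict HIJ (phi_rs s hj).
Proof.
apply: hcF_eq => [x hx | x y hx hy k c hc] /=.
  by rewrite /phi_ob -(Fmor_ndm_comp F (d := projGr s) hij _ (erefl (ndm (projGr s) (is_max_le hi hx)))).
rewrite /phi_hom fh_cast_hom.
apply: JMeq_trans (JMeq_cast_hom _ _ _) _; apply: JMeq_trans _ (JMeq_sym (JMeq_cast_hom _ _ _)).
have Ec : (fun t => [set did n z | z in c t]) = c.
  by apply: functional_extensionality => t; rewrite imset_id.
have -> : ngr_hom s (chainvS (subsetT J) (pull_chain (restrict_sub HIJ) hc)) =
          ngr_hom s (chainvS (subsetT I) hc).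
  by apply: JMeq_eq; apply: (hhom_irr s _ _ _ _ _ _ erefl erefl Ec).
exact: (fh_sFunctor_JMeq _
  (Fmor_ndm_comp F (d := projGr s) hij (is_max_le hj (pull_mem (restrict_sub HIJ) hy)) (erefl _))).
Qed.

Definition phi n (s : NGr F n) : RN F n := RNS (phi_rcompat s).

Section RelativeNerveSimplex.
Variables (n : nat) (r : RN F n).
Local Notation d := (rd r).

Section Compatibility.
Variables (I J : {set 'I_n.+1}) (i j : 'I_n.+1) (hi : is_max i I) (hj : is_max j J)
  (HIJ : I \subset J).

Lemma rcompat_hob (hij : i <= j) x (hxI : x \in I) (hxJ : x \in J) :
  fo (Fmor F (ndm d hij)) (hob (rs r hi) hxI) = hob (rs r hj) hxJ.
Proof. by have /= -> := f_equal (fun t => hob t hxI) (rcompat r hi hj HIJ hij); apply: hob_eq. Qed.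

Lemma rcompat_hhom (hij : i <= j) x y (hxI : x \in I) (hxJ : x \in J) (hyI : y \in I)
    (hyJ : y \in J) k (c : 'I_k.+1 -> {set 'I_n.+1}) (hcI : chainv I x y c) (hcJ : chainv J x y c) :
  JMeq (fh (Fmor F (ndm d hij)) (hhom (rs r hi) hxI hyI hcI)) (hhom (rs r hj) hxJ hyJ hcJ).
Proof.
change (JMeq (hhom (postcomp (Fmor_sFun F (ndm d hij)) (rs r hi)) hxI hyI hcI)
             (hhom (rs r hj) hxJ hyJ hcJ)).
rewrite (rcompat r hi hj HIJ hij) /=; apply: hhom_irr => //.
by apply: functional_extensionality => t; rewrite imset_id.
Qed.

End Compatibility.

Section SameMaximum.
Variables (I J : {set 'I_n.+1}) (j : 'I_n.+1) (hi : is_max j I) (hj : is_max j J)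
  (HIJ : I \subset J).

Lemma rcompat_hob_eq x (hxI : x \in I) (hxJ : x \in J) :
  hob (rs r hi) hxI = hob (rs r hj) hxJ.
Proof. by rewrite -(rcompat_hob hi hj HIJ (leqnn j) hxI hxJ) (Fmor_ndm_id F d). Qed.

Lemma rcompat_hhom_JMeq x y (hxI : x \in I) (hxJ : x \in J) (hyI : y \in I) (hyJ : y \in J)
    k (c : 'I_k.+1 -> {set 'I_n.+1}) (hcI : chainv I x y c) (hcJ : chainv J x y c) :
  JMeq (hhom (rs r hi) hxI hyI hcI) (hhom (rs r hj) hxJ hyJ hcJ).
Proof.
apply: JMeq_trans _ (rcompat_hhom hi hj HIJ (leqnn j) hxI hxJ hyI hyJ hcI hcJ).
exact: JMeq_sym (fh_sFunctor_JMeq _ (Fmor_ndm_id F d (leqnn j))).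
Qed.

End SameMaximum.

Definition psi_fibre (x : 'I_n.+1) : ob (Fob F (ndo d x)) := hob (rs r (is_max_set1 x)) (set11 x).

Definition psi_ob (x : 'I_n.+1) (hx : x \in [set: 'I_n.+1]) : Grob F :=
  existT _ (ndo d x) (psi_fibre x).

Lemma psi_hom_src (x y : 'I_n.+1) (h : x <= y) :
  hob (rs r (is_max_interval h)) (mem_interval_l h) = fo (Fmor F (ndm d h)) (psi_fibre x).
Proof. by rewrite /psi_fibre (rcompat_hob (is_max_set1 x) (is_max_interval h) (sub1_interval (leqnn x) h) h
                                     (set11 x) (mem_interval_l h)). Qed.

Lemma psi_hom_tgt (x y : 'I_n.+1) (h : x <= y) :
  hob (rs r (is_max_interval h)) (mem_interval_r h) = psi_fibre y.
Proof. by rewrite /psi_fibre (rcompat_hob_eq (is_max_set1 y) (is_max_interval h) (sub1_interval h (leqnn y))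
                                        (set11 y) (mem_interval_r h)). Qed.

Definition psi_hom x y (hx : x \in [set: 'I_n.+1]) (hy : y \in [set: 'I_n.+1]) k
    (c : 'I_k.+1 -> {set 'I_n.+1}) (hc : chainv setT x y c) :
  sx (Grhom (psi_ob hx) (psi_ob hy)) k :=
  existT _ (ndm d (chainv_le hc))
    (cast_hom (psi_hom_src (chainv_le hc)) (psi_hom_tgt (chainv_le hc))
       (hhom (rs r (is_max_interval (chainv_le hc)))
             (mem_interval_l (chainv_le hc)) (mem_interval_r (chainv_le hc))
             (chainv_interval hc))).

Lemma psi_hnat x y (hx : x \in [set: 'I_n.+1]) (hy : y \in [set: 'I_n.+1]) m k (g : Dmap m k)
    (c : 'I_k.+1 -> {set 'I_n.+1}) (hc : chainv setT x y c)
    (hc' : chainv setT x y (fun t => c (g t))) :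
  psi_hom hx hy hc' = sact g (psi_hom hx hy hc).
Proof.
rewrite /psi_hom /=; move: (chainv_interval hc') (chainv_interval hc).
have -> : chainv_le hc' = chainv_le hc by apply: eq_irrelevance.
move=> h' h; apply: existT_JMeq => //.
rewrite sact_cast_hom (hnat _ _ _ h h'); exact: JMeq_refl.
Qed.

Lemma psi_hcomp x y z (hx : x \in [set: 'I_n.+1]) (hy : y \in [set: 'I_n.+1])
    (hz : z \in [set: 'I_n.+1]) k (c1 c2 : 'I_k.+1 -> {set 'I_n.+1})
    (h1 : chainv setT x y c1) (h2 : chainv setT y z c2)
    (h3 : chainv setT x z (fun t => c2 t :|: c1 t)) :
  psi_hom hx hz h3 = Grcomp (psi_hom hy hz h2) (psi_hom hx hy h1).
Proof.
rewrite /psi_hom /Grcomp /=; apply: existT_JMeq; first exact: nd_comp.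
set l1 := chainv_le h1; set l2 := chainv_le h2; set l3 := chainv_le h3.
apply: JMeq_trans (JMeq_cast_hom _ _ _) _.
apply: JMeq_trans _ (JMeq_sym (JMeq_eq_rect_r_hom _ _)).
have Hxy : interval x y \subset interval x z by apply: sub_interval.
have Hyz : interval y z \subset interval x z by apply: sub_interval.
have yxz : y \in interval x z by rewrite inE l1 l2.
rewrite (hcomp _ _ yxz _ (chainvS Hxy (chainv_interval h1)) (chainvS Hyz (chainv_interval h2))).
rewrite fh_cast_hom; apply: comp_JMeq.
- rewrite -(rcompat_hob (is_max_set1 x) _ (sub1_interval (leqnn x) l3) l3 (set11 x)).
  by rewrite -(Fmor_ndm_comp F (d := d) l2 l3 (erefl (ndm d l1))).
- by rewrite -(rcompat_hob (is_max_set1 y) _ (sub1_interval l1 l2) l2 (set11 y)).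
- by rewrite -(rcompat_hob_eq (is_max_set1 z) _ (sub1_interval l3 (leqnn z)) (set11 z)).
- apply: JMeq_trans _ (JMeq_sym (JMeq_cast_hom _ _ _)).
  exact: JMeq_sym (rcompat_hhom_JMeq _ _ Hyz _ _ _ _ _ _).
- apply: JMeq_trans _ (JMeq_sym (JMeq_cast_hom _ _ _)).
  exact: JMeq_sym (rcompat_hhom _ _ Hxy l2 _ _ _ _ _ _).
Qed.

Lemma psi_hid x (hx : x \in [set: 'I_n.+1]) (h : chainv setT x x (fun _ : 'I_1 => [set x])) :
  psi_hom hx hx h = Gridn (psi_ob hx).
Proof.
rewrite /psi_hom /Gridn /=; apply: existT_JMeq; first exact: nd_id.
apply: JMeq_trans (JMeq_cast_hom _ _ _) _.
apply: JMeq_trans _ (JMeq_sym (JMeq_eq_rect_r_hom _ _)).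
rewrite (eq_irrelevance (mem_interval_r _) (mem_interval_l (chainv_le h))) hid.
apply: idn_JMeq; by rewrite -(rcompat_hob_eq (is_max_set1 x) _ (sub1_interval (leqnn x) (leqnn x)) (set11 x)).
Qed.

Definition psi : NGr F n := @HcF (GrF F) n setT psi_ob psi_hom psi_hnat psi_hcomp psi_hid.

End RelativeNerveSimplex.

Lemma psi_phi_ob n (s : NGr F n) x (hx : x \in [set: 'I_n.+1]) :
  psi_ob (phi s) hx = hob s hx.
Proof.
rewrite /psi_ob /psi_fibre /= /phi_ob (Fmor_ndm_id F) /=.
by rewrite (eq_irrelevance hx (in_setT x)) /ngr_ob; case: (hob s (in_setT x)).
Qed.

Lemma phiK n : cancel (@phi n) (@psi n).
Proof.
move=> s; apply: hcF_eq => [x hx | x y hx hy k c hc]; first exact: psi_phi_ob.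
apply: Grhom_JMeq => /=; try exact: psi_phi_ob.
  exact: JMeq_sym (projT1_hhom _ _ _ _ _).
apply: JMeq_trans (JMeq_cast_hom _ _ _) _; apply: JMeq_trans (JMeq_cast_hom _ _ _) _.
apply: JMeq_trans (fh_sFunctor_JMeq _ (Fmor_ndm_id F _ _)) _.
rewrite /= (eq_irrelevance hx (in_setT x)) (eq_irrelevance hy (in_setT y)) /ngr_hom.
by rewrite (eq_irrelevance (chainvS _ _) hc).
Qed.

Lemma projGr_psi n (r : RN F n) : projGr (psi r) = rd r.
Proof.
apply: (@NDs_eq _ n (projGr (psi r)) (rd r) erefl) => i j h /=.
by rewrite (eq_irrelevance (chainv_le _) h).
Qed.

Lemma psiK n : cancel (@psi n) (@phi n).
Proof.
move=> r; apply: (@RN_eq n (phi (psi r)) r (projGr_psi r)) => J j hj.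
suff E : phi_rs (psi r) hj = rs r hj by change (JMeq (phi_rs (psi r) hj) (rs r hj)); rewrite E.
apply: hcF_eq => [x hx | x y hx hy k c hc].
  by rewrite /= /phi_ob /= /psi_fibre (rcompat_hob r (is_max_set1 x) hj _ _ (set11 x) hx) // sub1set.
rewrite /= /phi_hom; apply: JMeq_trans (JMeq_cast_hom _ _ _) _.
rewrite /ngr_hom /= fh_cast_hom; apply: JMeq_trans (JMeq_cast_hom _ _ _) _.
have l := chainv_le hc.
have hK := is_max_setI_interval hy l.
have hxK : x \in J :&: interval x y by rewrite inE hx mem_interval_l.
have hyK : y \in J :&: interval x y by rewrite inE hy mem_interval_r.
have HKJ : J :&: interval x y \subset J := subsetIl _ _.
have HKI : J :&: interval x y \subset interval x y := subsetIr _ _.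
apply: JMeq_trans _ (rcompat_hhom r hK hj HKJ (is_max_le hj hy) hxK hx hyK hy
                       (chainv_setI_interval hc) hc).
rewrite (eq_irrelevance (chainv_le (ivl_chain (is_max_le hj hy))) (is_max_le hj hy)).
apply: fh_JMeq.
- exact: esym (rcompat_hob_eq r hK _ HKI hxK _).
- exact: esym (rcompat_hob_eq r hK _ HKI hyK _).
- exact: JMeq_sym (rcompat_hhom_JMeq r _ _ HKI _ _ _ _ _ _).
Qed.

Lemma projGr_NGract m n (g : Dmap m n) (s : NGr F n) :
  projGr (NGract g s) = ndact g (projGr s).
Proof.
have eo : ndo (projGr (NGract g s)) = ndo (ndact g (projGr s)).
  apply: functional_extensionality => i /=.
  by rewrite (eq_irrelevance (pull_mem _ _) (in_setT (g i))).
by apply: (NDs_eq eo) => i j h /=; apply: projT1_hhom.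
Qed.

Lemma ndm_projGr_NGract m n (g : Dmap m n) (s : NGr F n) (i j : 'I_m.+1)
    (h : i <= j) (h' : g i <= g j) :
  JMeq (ndm (projGr (NGract g s)) h) (ndm (projGr s) h').
Proof. by rewrite projGr_NGract /= (eq_irrelevance (monoP g h) h'). Qed.

Lemma phi_NGract m n (g : Dmap m n) (s : NGr F n) : phi (NGract g s) = RNact g (phi s).
Proof.
apply: (@RN_eq m (phi (NGract g s)) (RNact g (phi s)) (projGr_NGract g s)) => J j hj.
change (JMeq (phi_rs (NGract g s) hj) (pull g (subxx _) (phi_rs s (is_max_img g hj)))).
have ec : ndo (projGr (NGract g s)) j = ndo (projGr s) (g j) by rewrite projGr_NGract.
have eob x : ngr_ob (NGract g s) x = ngr_ob s (g x) by apply: (@hob_eq _ _ _ s).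
apply: hcF_JMeq => [|x hx | x y hx hy k c hc] /=.
- by move: ec => /= ->.
- by rewrite /phi_ob; apply: (fo_Fmor_JMeq (eob x) ec); apply: ndm_projGr_NGract.
rewrite /phi_hom; apply: JMeq_trans (JMeq_cast_hom _ _ _) _.
apply: JMeq_trans _ (JMeq_sym (JMeq_cast_hom _ _ _)).
apply: (fh_Fmor_JMeq (eob x) (eob y) ec); last exact: ndm_projGr_NGract.
exact: (hhom_irr s _ _ _ _ _ _ erefl erefl erefl).
Qed.

End GrothendieckNerve.

Theorem theorem3p10 (D : Cat) (F : sCatFunctor D) :
  exists phi : forall n, NGr F n -> RN F n,
    (forall n, bijective (phi n)) /\
    (forall m n (g : Dmap m n) (s : NGr F n), phi m (NGract g s) = RNact g (phi n s)) /\
    (forall n (s : NGr F n), rd (phi n s) = projGr s).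
Proof.
exists (@phi D F); split; last split.
- by move=> n; exists (@psi D F n); [apply: phiK | apply: psiK].
- exact: phi_NGract.
- by [].
Qed.
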